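(* In the standing setting, for all $t\in\{1,\dots,\overline R\}$, $k\in\{0,\dots,m\}$ and $\delta\in\{0,\dots,N\}$, $$\varphi^v(t,k,\delta)\le v\big(\sigma^v(t-1)\wedge k\big)-\big(\sigma^v(t-1)\wedge k\big)\,p_{t-1}.$$
   Context: Standing setting. Integers $n\ge2$, $m\ge1$; $N:=(n-1)m$. Reals $p_{\mathrm{init}}\ge0$, $\Delta P>0$; the price at round $t\ge0$ is $p_t:=p_{\mathrm{init}}+t\Delta P$. The player's valuation $v:\{0,\dots,m\}\to[0,\infty)$ satisfies $v(0)=0$ and is non-decreasing and concave. $\overline R:=\lceil (v(1)-p_{\mathrm{init}})/\Delta P\rceil$, assumed $\ge1$. For $t\ge0$, $\sigma^v(t):=\min\operatorname{argmax}_{0\le u\le m}(v(u)-up_t)$. The opponent is given by random variables $Z_1\ge Z_2\ge\dots\ge Z_N\ge0$ (a.s.) on a probability space $(\Omega,\mathcal F,\mathbb P)$; its demand at price $p$ is $\delta(p):=\sum_{j=1}^N\mathbf 1\{Z_j>p\}$. For $t\ge1$ fix transition kernels $K_t(\delta'\mid\delta)$ ($\delta,\delta'\in\{0,\dots,N\}$), each $K_t(\cdot\mid\delta)$ a probability on $\{0,\dots,\delta\}$, with $K_t(\delta'\mid\delta)=\mathbb P(\delta(p_t)=\delta'\mid\delta(p_{t-1})=\delta)$ whenever $\mathbb P(\delta(p_{t-1})=\delta)>0$. Value function: for $t\in\{1,\dots,\overline R\}$, $k\in\{0,\dots,m\}$, $\delta\in\{0,\dots,N\}$: $\varphi^v(t,k,\delta):=v(k)-kp_{t-1}$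 if $k+\delta\le m$; $:=\max_{0\le u\le k}\sum_{\delta'=0}^N K_t(\delta'\mid\delta)\varphi^v(t+1,u,\delta')$ if $k+\delta>m$ and $t<\overline R$; $:=0$ if $k+\delta>m$ and $t=\overline R$. $a\wedge b:=\min(a,b)$. *)

From HB Require Import structures.
From mathcomp Require Import all_boot all_order all_algebra.
From mathcomp Require Import all_classical all_reals all_analysis.
Set Implicit Arguments. Unset Strict Implicit. Unset Printing Implicit Defensive.
Import Order.TTheory GRing.Theory Num.Theory.
Local Open Scope ring_scope.

Section Defs.
Variable R : realType.

Definition price (pinit dP : R) (t : nat) : R := pinit + t%:R * dP.

Definition valuation_ok (m : nat) (v : nat -> R) : Prop :=
  [/\ v 0%N = 0,
      (forall u, (u <= m)%N -> 0 <= v u),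
      (forall u, (u < m)%N -> v u <= v u.+1) &
      (forall u, (0 < u < m)%N -> v u.+1 - v u <= v u - v u.-1)].

Definition Rbar (pinit dP : R) (v : nat -> R) : nat :=
  `|Num.ceil ((v 1%N - pinit) / dP)|%N.

Definition sigma (m : nat) (pinit dP : R) (v : nat -> R) (t : nat) : nat :=
  let g := fun u : nat => v u - u%:R * price pinit dP t in
  find (fun u => [forall w : 'I_m.+1, g w <= g u]) (iota 0 m.+1).

(* value function, by recursion on the fuel s = Rbar - t.
   K t d d' = K_t(d' | d). *)
Fixpoint phi_aux (m N : nat) (pinit dP : R) (v : nat -> R)
    (K : nat -> nat -> nat -> R) (s t k d : nat) : R :=
  if (k + d <= m)%N then v k - k%:R * price pinit dP t.-1
  else match s with
       | 0%N => 0
       | s'.+1 =>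
         let F := fun u : nat =>
           \sum_(d' < N.+1) K t d d' * phi_aux m N pinit dP v K s' t.+1 u d' in
         \big[Num.max/F 0%N]_(u < k.+1) F u
       end.

Definition phi (m N : nat) (pinit dP : R) (v : nat -> R)
    (K : nat -> nat -> nat -> R) (t k d : nat) : R :=
  phi_aux m N pinit dP v K (Rbar pinit dP v - t) t k d.

Definition demand {T : Type} (N : nat) (Z : nat -> T -> R) (p : R) (x : T) : nat :=
  (\sum_(1 <= j < N.+1) nat_of_bool (p < Z j x)%R)%N.

End Defs.

From HB Require Import structures.
From mathcomp Require Import all_boot all_order all_algebra.
From mathcomp Require Import all_classical all_reals all_analysis.
From mathcomp Require Import zify lra.
Import Order.TTheory GRing.Theory Num.Theory.
Local Open Scope ring_scope.

(* For a concave valuation the surplus u |-> v u - u p is unimodal: it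
   increases up to its first maximiser sigma and never exceeds its maximum
   afterwards.  Hence the surplus at [sigma(t-1) /\ k] dominates the surplus at
   any j <= k, at price p_(t-1) and a fortiori at the higher price p_t.  This
   bound is therefore an upper bound for the stopping payoff, is nonnegative
   (take j = 0), and dominates every continuation value, which is an average of
   bounds at round t+1 for some u <= k; induction on the remaining rounds. *)

Section Surplus.
Variables (R : realType) (m : nat) (v : nat -> R).
Hypothesis hv : valuation_ok m v.

Definition surplus (p : R) (u : nat) : R := v u - u%:R * p.

Lemma surplus_price_antitone p q u : p <= q -> surplus q u <= surplus p u.
Proof. by move=> hpq; rewrite lerD2l lerN2 ler_wpM2l. Qed.

Lemma surplusS p u : surplus p u.+1 = surplus p u + (v u.+1 - v u - p).
Proof. by rewrite /surplus -addn1 natrD mulrDl mul1r; lra. Qed.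

Lemma valuation_incr_antitone j u :
  (j <= u)%N -> (u < m)%N -> v u.+1 - v u <= v j.+1 - v j.
Proof.
case: hv => _ _ _ hconc; elim: u => [|u IH] hju hum.
  by have -> : j = 0%N by lia.
have [->|hju'] := eqVneq j u.+1; first by [].
by apply: le_trans (hconc u.+1 _) (IH _ _); lia.
Qed.

Lemma surplus_decr_after {p j i} : (j < i)%N -> (i <= m)%N ->
  v j.+1 - v j < p -> surplus p i < surplus p j.
Proof.
move=> + + hincr; elim: i => [|i IH] // hji him.
have hincr_i : v i.+1 - v i <= v j.+1 - v j by apply: valuation_incr_antitone; lia.
rewrite surplusS; have [<-|hji'] := eqVneq j i; first lra.
by have := IH ltac:(lia) ltac:(lia); lra.
Qed.

Lemma exists_surplus_argmax p :
  exists2 u, (u <= m)%N & forall w, (w <= m)%N -> surplus p w <= surplus p u.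
Proof.
suff: forall m', (m' <= m)%N -> exists2 u, (u <= m')%N &
    forall w, (w <= m')%N -> surplus p w <= surplus p u by exact.
elim=> [_|m' IH hm]; first by exists 0%N => // w; rewrite leqn0 => /eqP->.
have [u hu hmax] := IH (ltnW hm).
have hle w : (w <= m'.+1)%N -> w = m'.+1 \/ (w <= m')%N by lia.
have [hlast|hlast] := lerP (surplus p m'.+1) (surplus p u).
  by exists u => [|w /hle [->|/hmax]] //; lia.
by exists m'.+1 => // w /hle [->//|/hmax/le_trans]; apply; apply: ltW.
Qed.

Variables pinit dP : R.
Variable t : nat.
Local Notation s := (sigma m pinit dP v t).
Local Notation g := (surplus (price pinit dP t)).

Lemma sigma_is_argmax :
  (s <= m)%N /\ forall w, (w <= m)%N -> g w <= g s.
Proof.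
set good := fun u : nat => [forall w : 'I_m.+1, g w <= g u].
have hhas : has good (iota 0 m.+1).
  have [u hu hmax] := exists_surplus_argmax (price pinit dP t).
  apply/hasP; exists u; first by rewrite mem_iota; lia.
  by apply/forallP => w; apply: hmax; have := ltn_ord w; lia.
have /forallP hs := nth_find 0%N hhas.
have hsm : (s < m.+1)%N by move: hhas; rewrite has_find size_iota.
move: hs; rewrite nth_iota // add0n => hs.
by split=> // w hw; exact: (hs (Ordinal (hw : (w < m.+1)%N))).
Qed.

Lemma surplus_nondecr_sigma {i j} : (i <= j)%N -> (j <= s)%N -> g i <= g j.
Proof.
have [hsm hmax] := sigma_is_argmax.
elim: j => [|j IH] hij hjs; first by have -> : i = 0%N by lia.
have [->//|hij'] := eqVneq i j.+1.
apply: le_trans (IH ltac:(lia) ltac:(lia)) _.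
rewrite surplusS lerDl subr_ge0 leNgt; apply/negP => hincr.
have := surplus_decr_after hjs hsm hincr; rewrite ltNge.
by move/negP; apply; apply: hmax; lia.
Qed.

Lemma surplus_le_minn_sigma j k : (j <= k)%N -> (k <= m)%N ->
  g j <= g (minn s k).
Proof.
move=> hjk hkm; have [_ hmax] := sigma_is_argmax.
have [hjs|hsj] := leqP j s.
  by apply: surplus_nondecr_sigma; lia.
by rewrite (minn_idPl (_ : (s <= k)%N)); [apply: hmax|]; lia.
Qed.

Lemma surplus_minn_sigma_ge0 k : 0 <= g (minn s k).
Proof.
apply: le_trans _ (surplus_nondecr_sigma (leq0n _) (geq_minl s k)).
by case: hv => v0 _ _ _; rewrite /surplus v0 mul0r subr0.
Qed.

End Surplus.

Arguments surplus {R} v p u.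

Lemma price_nondecr (R : realType) (pinit dP : R) t t' :
  0 < dP -> (t <= t')%N -> price pinit dP t <= price pinit dP t'.
Proof.
by move=> hdP htt; rewrite /price lerD2l ler_pM2r // ler_nat.
Qed.

Lemma convex_comb_le (R : realType) n (w f : 'I_n -> R) b :
  (forall i, 0 <= w i) -> \sum_i w i = 1 -> (forall i, f i <= b) ->
  \sum_i w i * f i <= b.
Proof.
move=> hw0 hw1 hf; rewrite -[b]mul1r -hw1 mulr_suml.
by apply: ler_sum => i _; rewrite ler_wpM2l.
Qed.

Section ValueBound.
Variables (R : realType) (m N : nat) (v : nat -> R) (pinit dP : R).
Variable K : nat -> nat -> nat -> R.
Hypothesis hv : valuation_ok m v.
Hypothesis hdP : 0 < dP.
Hypothesis K_ge0 : forall t d d', (1 <= t)%N -> (d <= N)%N -> 0 <= K t d d'.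
Hypothesis K_supp : forall t d d', (1 <= t)%N -> (d <= N)%N -> (d < d')%N ->
  K t d d' = 0.
Hypothesis K_sum1 : forall t d, (1 <= t)%N -> (d <= N)%N ->
  \sum_(d' < d.+1) K t d d' = 1.

Definition value_bound t k : R :=
  surplus v (price pinit dP t.-1) (minn (sigma m pinit dP v t.-1) k).

Lemma kernel_row_sum1 t d : (1 <= t)%N -> (d <= N)%N ->
  \sum_(d' < N.+1) K t d d' = 1.
Proof.
move=> ht hd; rewrite -(K_sum1 t d ht hd).
rewrite [RHS](big_ord_widen N.+1 (K t d)) ?ltnS // [RHS]big_mkcond.
apply: eq_bigr => i _; case: ifPn => // /negbTE; rewrite ltnS => /negbT.
by rewrite -ltnNge; apply: K_supp.
Qed.

Lemma value_bound_succ_le {t u k} : (1 <= t)%N -> (u <= k)%N -> (k <= m)%N ->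
  value_bound t.+1 u <= value_bound t k.
Proof.
move=> ht huk hkm; rewrite /value_bound /=.
set j := minn _ u; have hju : (j <= u)%N by rewrite geq_minr.
have hprice : price pinit dP t.-1 <= price pinit dP t.
  by apply: price_nondecr; rewrite ?leq_pred.
apply: le_trans (@surplus_price_antitone _ v _ _ j hprice) _.
by apply: surplus_le_minn_sigma => //; lia.
Qed.

Lemma phi_aux_le_value_bound r t k d : (1 <= t)%N -> (k <= m)%N -> (d <= N)%N ->
  phi_aux m N pinit dP v K r t k d <= value_bound t k.
Proof.
elim: r t k d => [|r IH] t k d ht hkm hd /=;
  case: ifP => _; try exact: surplus_le_minn_sigma;
  first exact: surplus_minn_sigma_ge0.
have hcont u : (u <= k)%N -> \sum_(d' < N.+1)
    K t d d' * phi_aux m N pinit dP v K r t.+1 u d' <= value_bound t k.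
  move=> huk; apply: le_trans _ (value_bound_succ_le ht huk hkm).
  apply: convex_comb_le => [i||i]; first exact: K_ge0.
    exact: kernel_row_sum1.
  by apply: IH => //; [lia | rewrite -ltnS].
by apply: bigmax_le => [|u _]; apply: hcont; [|rewrite -ltnS].
Qed.

End ValueBound.

Local Open Scope classical_set_scope.

Theorem mainTheorem9 (R : realType) (n m N : nat) (pinit dP : R)
  (v : nat -> R)
  (d0 : measure_display) (T : measurableType d0) (P : probability T R)
  (Z : nat -> T -> R) (K : nat -> nat -> nat -> R) :
  (2 <= n)%N -> (1 <= m)%N -> N = ((n - 1) * m)%N ->
  0 <= pinit -> 0 < dP ->
  valuation_ok m v ->
  (1 <= Num.ceil ((v 1%N - pinit) / dP))%R ->
  (forall j, (1 <= j <= N)%N -> measurable_fun setT (Z j)) ->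
  {ae P, forall x, (forall j, (1 <= j < N)%N -> Z j.+1 x <= Z j x) /\ 0 <= Z N x} ->
  (forall t d d', (1 <= t)%N -> (d <= N)%N -> 0 <= K t d d') ->
  (forall t d d', (1 <= t)%N -> (d <= N)%N -> (d < d')%N -> K t d d' = 0) ->
  (forall t d, (1 <= t)%N -> (d <= N)%N -> \sum_(d' < d.+1) K t d d' = 1) ->
  (forall t d d', (1 <= t)%N -> (d <= N)%N -> (d' <= N)%N ->
     let A := [set x | demand N Z (price pinit dP t.-1) x = d] in
     let B := [set x | demand N Z (price pinit dP t) x = d'] in
     (0 < P A)%E ->
     K t d d' = fine (P (B `&` A)) / fine (P A)) ->
  forall t k d, (1 <= t <= Rbar pinit dP v)%N -> (k <= m)%N -> (d <= N)%N ->
    phi m N pinit dP v K t k d <=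
      v (minn (sigma m pinit dP v t.-1) k)
      - (minn (sigma m pinit dP v t.-1) k)%:R * price pinit dP t.-1.
Proof.
(* Only the stochasticity of the kernels matters: the bound holds whatever the
   opponent. *)
move=> _ _ _ _ hdP hv _ _ _ K_ge0 K_supp K_sum1 _ t k d /andP[ht _] hkm hd.
exact: (@phi_aux_le_value_bound R m N v pinit dP K hv hdP K_ge0 K_supp K_sum1).
Qed.
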